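(* Let $P:\mathcal C^{op}\to\mathbf{PreOrd}$ be a doctrine and $J$ a Grothendieck topology on $\mathcal C\rtimes P$. Then there is a chain of isomorphisms of doctrines $$Z(P,J)\cong Z(P^\top,J^\top)\cong\mathfrak I(P^\top,J^\top)\cong\mathfrak I(P,J).$$ In particular the topos-theoretically defined doctrine $Z(P,J)$ is isomorphic to the explicitly described doctrine $\mathfrak I(P,J)$.
   Context: For a doctrine $P:\mathcal C^{op}\to\mathbf{PreOrd}$, $\mathcal C\rtimes P$ has objects $(c,x)$, $x\in P(c)$, and morphisms $f:(c,x)\to(d,y)$ the $f:c\to d$ with $x\le P(f)(y)$; $p_P:\mathcal C\rtimes P\to\mathcal C$ is the projection. Topos-theoretic completion $Z(P,J):\mathcal C^{op}\to\mathbf{Frm}$: for $c\in\mathcal C$, $Z(P,J)(c)$ is the frame of subobjects, in $\mathbf{Sh}(\mathcal C\rtimes P,J)$, of the sheafification $a_J(\mathrm{Hom}_{\mathcal C}(p_P(-),c))$ of the presheaf $\mathrm{Hom}_{\mathcal C}(p_P(-),c)$ on $\mathcal C\rtimes P$; for $f:d\to c$, $Z(P,J)(f)$ is pullback along $a_J(\mathrm{Hom}_{\mathcal C}(p_P(-),f))$. (Equivalently, $Z(P,J)$ is the direct image of the subobject classifier of $\mathbf{Sh}(\mathcal C\rtimes P,J)$ along the geometric morphism to $\mathbf{Sets}^{\mathcal C^{op}}$ induced by $p_P$.) Explicit completion $\mathfrak I(P,J)$: $\mathfrak I(P,J)(c)$ is the set, ordered by inclusion, of sets $S$ of pairs $(f,x)$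 with $f:d\to c$ in $\mathcal C$ and $x\in P(d)$ such that (a) if $(f,x)\in S$, $g:e\to d$, $y\in P(e)$ and $y\le P(g)(x)$ then $(f\circ g,y)\in S$; (b) if $f:d\to c$, $x\in P(d)$ and there is a $J$-covering family $\{h_i:(e_i,y_i)\to(d,x)\}$ in $\mathcal C\rtimes P$ with $(f\circ h_i,y_i)\in S$ for all $i$, then $(f,x)\in S$; and $\mathfrak I(P,J)(f)(S)=\{(g,y):(f\circ g,y)\in S\}$ for $f:d\to c$. Free top completion: $P^\top(c)=P(c)\oplus\{\top_c\}$ ($P(c)$ with a new top element), $P^\top(f)$ extends $P(f)$ with $\top_c\mapsto\top_d$. $J^\top$ on $\mathcal C\rtimes P^\top$: a sieve on $(c,x)$, $x\in P(c)$, covers iff it is $J$-covering; a sieve $S$ on $(c,\top_c)$ covers iff $f^*(S)$ is $J$-covering for every $f:(d,x)\to(c,\top_c)$ with $x\in P(d)$. *)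

From Stdlib Require Import ProofIrrelevance.
Set Implicit Arguments.
Unset Strict Implicit.

(** * Categories (hom-types with Leibniz equality of morphisms) *)
Record Cat := MkCat {
  ob : Type;
  hom : ob -> ob -> Type;
  idm : forall a, hom a a;
  cmp : forall a b c, hom b c -> hom a b -> hom a c;
  cmp_idl : forall a b (f : hom a b), cmp (idm b) f = f;
  cmp_idr : forall a b (f : hom a b), cmp f (idm a) = f;
  cmp_assoc : forall a b c d (h : hom c d) (g : hom b c) (f : hom a b),
     cmp h (cmp g f) = cmp (cmp h g) f }.
Arguments hom : clear implicits.
Arguments idm {_} a.
Arguments cmp {_ _ _ _} _ _.

(** * Doctrines  P : C^op -> PreOrd  (strict functors) *)
Record Doctrine (C : Cat) := MkDoc {
  dP : ob C -> Type;
  dle : forall c, dP c -> dP c -> Prop;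
  dle_refl : forall c (x : dP c), dle x x;
  dle_trans : forall c (x y z : dP c), dle x y -> dle y z -> dle x z;
  dmap : forall c d, hom C d c -> dP c -> dP d;
  dmap_mono : forall c d (f : hom C d c) (x y : dP c),
     dle x y -> dle (dmap f x) (dmap f y);
  dmap_id : forall c (x : dP c), dmap (idm c) x = x;
  dmap_cmp : forall c d e (f : hom C d c) (g : hom C e d) (x : dP c),
     dmap (cmp f g) x = dmap g (dmap f x) }.
Arguments dP {C} _ c.
Arguments dle {C _ c}.
Arguments dmap {C _ c d}.

Lemma sig_eq (A : Type) (Q : A -> Prop) (u v : sig Q) :
  proj1_sig u = proj1_sig v -> u = v.
Proof. destruct u, v; simpl; intros ->; f_equal; apply proof_irrelevance. Qed.

(** * The Grothendieck construction  C ⋊ P  and the projection p_P *)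
Section CP.
Variables (C : Cat) (P : Doctrine C).
Definition CPob := {c : ob C & dP P c}.
Definition CPhom (a b : CPob) :=
  {f : hom C (projT1 a) (projT1 b) | dle (projT2 a) (dmap f (projT2 b))}.
Lemma CPid_pf (a : CPob) : dle (projT2 a) (dmap (idm (projT1 a)) (projT2 a)).
Proof. rewrite dmap_id; apply dle_refl. Qed.
Definition CPid (a : CPob) : CPhom a a := exist _ (idm _) (CPid_pf a).
Lemma CPcmp_pf (a b c : CPob) (g : CPhom b c) (f : CPhom a b) :
  dle (projT2 a) (dmap (cmp (proj1_sig g) (proj1_sig f)) (projT2 c)).
Proof.
  rewrite dmap_cmp. eapply dle_trans. apply (proj2_sig f).
  apply dmap_mono, (proj2_sig g).
Qed.
Definition CPcmp (a b c : CPob) (g : CPhom b c) (f : CPhom a b) : CPhom a c :=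
  exist _ (cmp (proj1_sig g) (proj1_sig f)) (CPcmp_pf g f).
Lemma CPcmp_idl a b (f : CPhom a b) : CPcmp (CPid b) f = f.
Proof. apply sig_eq; simpl; apply cmp_idl. Qed.
Lemma CPcmp_idr a b (f : CPhom a b) : CPcmp f (CPid a) = f.
Proof. apply sig_eq; simpl; apply cmp_idr. Qed.
Lemma CPcmp_assoc a b c d (h : CPhom c d) (g : CPhom b c) (f : CPhom a b) :
  CPcmp h (CPcmp g f) = CPcmp (CPcmp h g) f.
Proof. apply sig_eq; simpl; apply cmp_assoc. Qed.
Definition CP : Cat := MkCat CPcmp_idl CPcmp_idr CPcmp_assoc.
End CP.

Definition sieve (D : Cat) (o : ob D) := forall e : ob D, hom D e o -> Prop.
Definition is_sieve (D : Cat) (o : ob D) (S : sieve o) : Prop :=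
  forall e (h : hom D e o) e' (g : hom D e' e), S e h -> S e' (cmp h g).
Definition max_sieve (D : Cat) (o : ob D) : sieve o := fun _ _ => True.
Definition pb_sieve (D : Cat) (o a : ob D) (f : hom D a o) (S : sieve o) : sieve a :=
  fun e h => S e (cmp f h).
Definition gen_sieve (D : Cat) (o : ob D) (I : Type) (e : I -> ob D)
  (h : forall i, hom D (e i) o) : sieve o :=
  fun e' k => exists i (g : hom D e' (e i)), k = cmp (h i) g.

Definition coverage (D : Cat) := forall o : ob D, sieve o -> Prop.

Definition is_topology (D : Cat) (J : coverage D) : Prop :=
  (forall o S, J o S -> is_sieve S) /\
  (forall o, J o (max_sieve (o := o))) /\
  (forall o (S : sieve o) a (f : hom D a o), J o S -> J a (pb_sieve f S)) /\
  (forall o (S R : sieve o), J o S -> is_sieve R ->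
     (forall e (h : hom D e o), S e h -> J e (pb_sieve h R)) -> J o R).

Record Psh (D : Cat) := MkPsh {
  pobj : ob D -> Type;
  pmap : forall a b, hom D a b -> pobj b -> pobj a;
  pmap_id : forall a (x : pobj a), pmap (idm a) x = x;
  pmap_cmp : forall a b c (g : hom D b c) (f : hom D a b) (x : pobj c),
     pmap (cmp g f) x = pmap f (pmap g x) }.
Arguments pobj {D} _ a.
Arguments pmap {D} _ {a b}.

Definition NT (D : Cat) (F G : Psh D) :=
  {eta : forall a, pobj F a -> pobj G a |
     forall a b (f : hom D a b) x, eta a (pmap F f x) = pmap G f (eta b x)}.
Definition ntc (D : Cat) (F G : Psh D) (u : NT F G) a : pobj F a -> pobj G a :=
  proj1_sig u a.
Arguments ntc {D F G} u a _.
Lemma ntcomp_pf (D : Cat) (F G H : Psh D) (v : NT G H) (u : NT F G) :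
  forall a b (f : hom D a b) x,
    ntc v a (ntc u a (pmap F f x)) = pmap H f (ntc v b (ntc u b x)).
Proof.
  intros. unfold ntc. rewrite (proj2_sig u), (proj2_sig v). reflexivity.
Qed.
Definition ntcomp (D : Cat) (F G H : Psh D) (v : NT G H) (u : NT F G) : NT F H :=
  exist _ (fun a x => ntc v a (ntc u a x)) (ntcomp_pf v u).
Definition nteq (D : Cat) (F G : Psh D) (u v : NT F G) : Prop :=
  forall a x, ntc u a x = ntc v a x.

Definition is_sheaf (D : Cat) (J : coverage D) (F : Psh D) : Prop :=
  forall o (S : sieve o), J o S ->
  forall s : forall e (h : hom D e o), S e h -> pobj F e,
  (forall e (h : hom D e o) (Hh : S e h) e' (g : hom D e' e) (Hg : S e' (cmp h g)),
      s e' (cmp h g) Hg = pmap F g (s e h Hh)) ->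
  exists x, (forall e (h : hom D e o) (Hh : S e h), pmap F h x = s e h Hh) /\
     (forall y, (forall e (h : hom D e o) (Hh : S e h), pmap F h y = s e h Hh) -> y = x).

Definition is_sheafification (D : Cat) (J : coverage D) (X A : Psh D) (eta : NT X A) : Prop :=
  is_sheaf J A /\
  forall G, is_sheaf J G -> forall t : NT X G,
    exists u : NT A G, nteq (ntcomp u eta) t /\
      forall u' : NT A G, nteq (ntcomp u' eta) t -> nteq u' u.

Definition is_mono_sh (D : Cat) (J : coverage D) (G A : Psh D) (m : NT G A) : Prop :=
  forall H, is_sheaf J H -> forall u v : NT H G,
    nteq (ntcomp m u) (ntcomp m v) -> nteq u v.

Record SubObj (D : Cat) (J : coverage D) (A : Psh D) := MkSub {
  so_dom : Psh D;
  so_sheaf : is_sheaf J so_dom;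
  so_m : NT so_dom A;
  so_mono : is_mono_sh J so_m }.
Arguments so_dom {D J A}.
Arguments so_m {D J A}.

Definition so_le (D : Cat) (J : coverage D) (A : Psh D) (m n : SubObj J A) : Prop :=
  exists u : NT (so_dom m) (so_dom n), nteq (ntcomp (so_m n) u) (so_m m).

Definition is_pullback_sub (D : Cat) (J : coverage D) (A A' : Psh D) (g : NT A' A)
  (m : SubObj J A) (m' : SubObj J A') : Prop :=
  exists q : NT (so_dom m') (so_dom m),
    nteq (ntcomp (so_m m) q) (ntcomp g (so_m m')) /\
    forall H, is_sheaf J H -> forall (u : NT H A') (v : NT H (so_dom m)),
      nteq (ntcomp g u) (ntcomp (so_m m) v) ->
      exists w : NT H (so_dom m'),
        (nteq (ntcomp (so_m m') w) u /\ nteq (ntcomp q w) v) /\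
        forall w' : NT H (so_dom m'),
          nteq (ntcomp (so_m m') w') u -> nteq (ntcomp q w') v -> nteq w' w.

(** * The representable-along-p_P presheaves  Hom_C(p_P(-), c)  on C ⋊ P *)
Section HomP.
Variables (C : Cat) (P : Doctrine C).
Lemma homP_id (c : ob C) (a : ob (CP P)) (x : hom C (projT1 a) c) :
  cmp x (proj1_sig (@idm (CP P) a)) = x.
Proof. apply cmp_idr. Qed.
Lemma homP_cmp (c : ob C) (a b d : ob (CP P)) (g : hom (CP P) b d) (f : hom (CP P) a b)
  (x : hom C (projT1 d) c) :
  cmp x (proj1_sig (cmp g f)) = cmp (cmp x (proj1_sig g)) (proj1_sig f).
Proof. apply cmp_assoc. Qed.
Definition homP (c : ob C) : Psh (CP P) :=
  @MkPsh (CP P) (fun a => hom C (projT1 a) c)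
    (fun a b (f : hom (CP P) a b) (x : hom C (projT1 b) c) => cmp x (proj1_sig f))
    (@homP_id c) (@homP_cmp c).
Lemma homPmap_pf (c d : ob C) (f : hom C d c) :
  forall (a b : ob (CP P)) (k : hom (CP P) a b) (x : pobj (homP d) b),
    cmp f (pmap (homP d) k x) = pmap (homP c) k (cmp f x).
Proof. intros; simpl; apply cmp_assoc. Qed.
Definition homPmap (c d : ob C) (f : hom C d c) : NT (homP d) (homP c) :=
  exist _ (fun a (x : pobj (homP d) a) => (cmp f x : pobj (homP c) a)) (homPmap_pf f).
End HomP.

(** * Isomorphism of doctrines, for doctrines presented by carriers, preorders
    and (functional up to equivalence) reindexing relations  re f x y  :<->
    "y represents D(f)(x)". *)
Definition doc_iso (C : Cat) (D E : ob C -> Type)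
  (leD : forall c, D c -> D c -> Prop) (leE : forall c, E c -> E c -> Prop)
  (reD : forall c d, hom C d c -> D c -> D d -> Prop)
  (reE : forall c d, hom C d c -> E c -> E d -> Prop) : Prop :=
  exists (phi : forall c, D c -> E c) (psi : forall c, E c -> D c),
    (forall c (x y : D c), leD c x y <-> leE c (phi c x) (phi c y)) /\
    (forall c (z : E c), leE c (phi c (psi c z)) z /\ leE c z (phi c (psi c z))) /\
    (forall c d (f : hom C d c) (x : D c) (y : D d),
        reD c d f x y -> reE c d f (phi c x) (phi d y)).

(** * The topos-theoretic completion Z(P,J), relative to a given (chosen)
    sheafification  eta_c : Hom(p_P(-),c) => a_J(Hom(p_P(-),c)). *)
Section Zdoc.
Variables (C : Cat) (P : Doctrine C) (J : coverage (CP P))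
  (a : ob C -> Psh (CP P)) (eta : forall c, NT (homP P c) (a c)).
Definition Zcar (c : ob C) := SubObj J (a c).
Definition Zle (c : ob C) (m n : Zcar c) : Prop := so_le m n.
(** Z(P,J)(f) = pullback along a_J(Hom(p_P(-),f)), the unique map u with
    u ∘ eta_d = eta_c ∘ Hom(p_P(-),f) *)
Definition Zre (c d : ob C) (f : hom C d c) (m : Zcar c) (m' : Zcar d) : Prop :=
  exists u : NT (a d) (a c),
    nteq (ntcomp u (eta d)) (ntcomp (eta c) (homPmap P f)) /\
    is_pullback_sub u m m'.
End Zdoc.

(** * The explicit completion I(P,J) *)
Section Idoc.
Variables (C : Cat) (P : Doctrine C) (J : coverage (CP P)).
Definition Ipred (c : ob C) := forall d : ob C, hom C d c -> dP P d -> Prop.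
Definition Iclosed (c : ob C) (S : Ipred c) : Prop :=
  (forall d (f : hom C d c) (x : dP P d) e (g : hom C e d) (y : dP P e),
      S d f x -> dle y (dmap g x) -> S e (cmp f g) y) /\
  (forall d (f : hom C d c) (x : dP P d),
      (exists (I : Type) (e : I -> ob (CP P))
              (h : forall i, hom (CP P) (e i) (existT _ d x)),
         @J (existT _ d x) (gen_sieve h) /\
         forall i, S (projT1 (e i)) (cmp f (proj1_sig (h i))) (projT2 (e i))) ->
      S d f x).
Definition Icar (c : ob C) := {S : Ipred c | Iclosed S}.
Definition Ile (c : ob C) (S T : Icar c) : Prop :=
  forall d (f : hom C d c) x, proj1_sig S d f x -> proj1_sig T d f x.
Definition Ire (c d : ob C) (f : hom C d c) (S : Icar c) (T : Icar d) : Prop :=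
  forall e (g : hom C e d) y, proj1_sig T e g y <-> proj1_sig S e (cmp f g) y.
End Idoc.

(** * Free top completion P^⊤ (None = the new top element ⊤_c) *)
Section Top.
Variables (C : Cat) (P : Doctrine C).
Definition tle (c : ob C) (u v : option (dP P c)) : Prop :=
  match u, v with
  | _, None => True
  | Some x, Some y => dle x y
  | None, Some _ => False
  end.
Lemma tle_refl c (u : option (dP P c)) : tle u u.
Proof. destruct u; simpl; auto using dle_refl. Qed.
Lemma tle_trans c (u v w : option (dP P c)) : tle u v -> tle v w -> tle u w.
Proof.
  destruct u, v, w; simpl; try tauto. apply dle_trans.
Qed.
Definition tmap (c d : ob C) (f : hom C d c) (u : option (dP P c)) : option (dP P d) :=
  option_map (dmap f) u.
Lemma tmap_mono c d (f : hom C d c) u v : tle u v -> tle (tmap f u) (tmap f v).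
Proof. destruct u, v; simpl; auto using dmap_mono. Qed.
Lemma tmap_id c u : tmap (idm c) u = u.
Proof. destruct u; simpl; auto. rewrite dmap_id; reflexivity. Qed.
Lemma tmap_cmp c d e (f : hom C d c) (g : hom C e d) u :
  tmap (cmp f g) u = tmap g (tmap f u).
Proof. destruct u; simpl; auto. rewrite dmap_cmp; reflexivity. Qed.
Definition Ptop : Doctrine C :=
  @MkDoc C (fun c => option (dP P c)) tle tle_refl tle_trans tmap tmap_mono tmap_id tmap_cmp.

Definition lift_hom (a b : ob (CP P)) (h : hom (CP P) a b) :
  hom (CP Ptop) (existT _ (projT1 a) (Some (projT2 a)))
                (existT _ (projT1 b) (Some (projT2 b))) :=
  exist _ (proj1_sig h) (proj2_sig h).
Definition restrict_sieve (c : ob C) (x : dP P c)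
  (S : sieve (D := CP Ptop) (existT _ c (Some x))) : sieve (D := CP P) (existT _ c x) :=
  fun e h => S (existT _ (projT1 e) (Some (projT2 e))) (lift_hom h).

Variable J : coverage (CP P).
Definition Jtop : coverage (CP Ptop) :=
  fun o => match o as o0 return sieve (D := CP Ptop) o0 -> Prop with
  | existT _ c ox =>
      match ox as ox0 return sieve (D := CP Ptop) (existT _ c ox0) -> Prop with
      | Some x => fun S => is_sieve S /\ @J (existT _ c x) (restrict_sieve S)
      | None => fun S => is_sieve S /\
          forall d (x : dP P d)
                 (f : hom (CP Ptop) (existT _ d (Some x)) (existT _ c None)),
            @J (existT _ d x) (restrict_sieve (pb_sieve f S))
      end
  end.
End Top.

(** The heart of the proof is the middle isomorphism Z(P,J) ≅ I(P,J), proved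
    for an ARBITRARY doctrine and topology; applying it to (P,J) and to
    (P^⊤,J^⊤) and comparing I(P^⊤,J^⊤) with I(P,J) directly gives the chain.

    - Sieve calculus, and the presheaf Ω_J of J-closed sieves, which is a
      J-sheaf: it classifies the subobjects we need in Sh(C ⋊ P, J).
    - Subsheaves [Sub χ] cut out by a map χ : A ⇒ Ω_J; every mono m of
      sheaves has a characteristic map [char_map m] whose truth set is the
      image of m. Consequences: monos are pointwise injective, subobjects are
      compared and pulled back through their points.
    - Z ≅ I: a subobject m of a_J(Hom(p_P(-),c)) is sent to the ideal of
      pairs (f,x) with η_c(f) ∈ m; conversely an ideal S has a characteristic
      map Hom(p_P(-),c) ⇒ Ω_J, which extends along η_c by the universal
      property of sheafification.
    - I(P^⊤,J^⊤) ≅ I(P,J): an ideal of P^⊤ is determined by its pairs (f,x)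
      with x ≠ ⊤, since (f,⊤_d) ∈ S iff (f∘g,y) ∈ S for all g, y. *)

From Stdlib Require Import FunctionalExtensionality PropExtensionality ClassicalEpsilon.
Set Implicit Arguments.
Unset Strict Implicit.

#[local] Arguments so_sheaf {D J A} s.
#[local] Arguments so_mono {D J A} s.

Section SieveCalculus.
Variables (D : Cat) (J : coverage D).

Lemma sieve_ext (o : ob D) (S R : sieve o) : (forall e h, S e h <-> R e h) -> S = R.
Proof.
  intros H. apply functional_extensionality_dep; intro e.
  apply functional_extensionality; intro h. apply propositional_extensionality; auto.
Qed.

Lemma J_ext o (S R : sieve o) : J S -> (forall e h, S e h <-> R e h) -> J R.
Proof. intros HS HSR. rewrite <- (sieve_ext HSR). exact HS. Qed.

Lemma pb_is_sieve o a (f : hom D a o) (S : sieve o) : is_sieve S -> is_sieve (pb_sieve f S).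
Proof. intros HS e h e' g H. unfold pb_sieve in *. rewrite cmp_assoc. apply HS; auto. Qed.

Lemma pb_pb o a b (f : hom D a o) (g : hom D b a) (S : sieve o) e (h : hom D e b) :
  pb_sieve g (pb_sieve f S) h <-> pb_sieve (cmp f g) S h.
Proof. unfold pb_sieve. rewrite cmp_assoc. tauto. Qed.

Lemma gen_is_sieve o (I : Type) (e : I -> ob D) (h : forall i, hom D (e i) o) :
  is_sieve (gen_sieve h).
Proof. intros e1 k e2 g [i [g' ->]]. exists i, (cmp g' g). symmetry. apply cmp_assoc. Qed.

Lemma sieve_idm o (S : sieve o) (HS : is_sieve S) e (k : hom D e o) : S o (idm o) -> S e k.
Proof. intros H. rewrite <- (cmp_idl k). apply HS; auto. Qed.

Hypothesis HJ : is_topology J.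

Lemma J_sieve o (S : sieve o) : J S -> is_sieve S.
Proof. apply (proj1 HJ). Qed.

Lemma J_max o : J (max_sieve (o := o)).
Proof. apply (proj1 (proj2 HJ)). Qed.

Lemma J_pb o (S : sieve o) a (f : hom D a o) : J S -> J (pb_sieve f S).
Proof. apply (proj1 (proj2 (proj2 HJ))). Qed.

Lemma J_trans o (S R : sieve o) :
  J S -> is_sieve R -> (forall e (h : hom D e o), S e h -> J (pb_sieve h R)) -> J R.
Proof. apply (proj2 (proj2 (proj2 HJ))). Qed.

Lemma J_up o (S R : sieve o) : J S -> is_sieve R -> (forall e h, S e h -> R e h) -> J R.
Proof.
  intros HS HR Hsub. apply (J_trans HS HR). intros e h Hh.
  apply (J_ext (J_max e)). intros e' g. unfold max_sieve, pb_sieve. split; auto.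
Qed.

End SieveCalculus.

Lemma naturality (D : Cat) (F G : Psh D) (u : NT F G) a b (f : hom D a b) x :
  ntc u a (pmap F f x) = pmap G f (ntc u b x).
Proof. apply (proj2_sig u). Qed.

Definition mkNT (D : Cat) (F G : Psh D) (eta : forall a, pobj F a -> pobj G a)
  (Heta : forall a b (f : hom D a b) x, eta a (pmap F f x) = pmap G f (eta b x)) : NT F G :=
  exist _ eta Heta.
Arguments mkNT {D F G} eta Heta.

(** The subobject classifier Ω_J of Sh(D,J): J-closed sieves, reindexed by pullback. *)
Section Omega.
Variables (D : Cat) (J : coverage D).

Definition closed_sieve o (S : sieve o) : Prop :=
  is_sieve S /\ forall e (k : hom D e o), J (pb_sieve k S) -> S e k.

Lemma pb_closed o a (f : hom D a o) (S : sieve o) : closed_sieve S -> closed_sieve (pb_sieve f S).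
Proof.
  intros [HS Hc]. split; [apply pb_is_sieve; auto |].
  intros e k Hk. apply Hc. eapply J_ext; [exact Hk |]. intros; apply pb_pb.
Qed.

Definition Omega_ob o := {S : sieve o | closed_sieve S}.
Definition Omega_map a b (f : hom D a b) (S : Omega_ob b) : Omega_ob a :=
  exist _ (pb_sieve f (proj1_sig S)) (pb_closed f (proj2_sig S)).
Lemma Omega_map_id a (S : Omega_ob a) : Omega_map (idm a) S = S.
Proof. apply sig_eq, sieve_ext. intros. simpl. unfold pb_sieve. rewrite cmp_idl. tauto. Qed.
Lemma Omega_map_cmp a b c (g : hom D b c) (f : hom D a b) (S : Omega_ob c) :
  Omega_map (cmp g f) S = Omega_map f (Omega_map g S).
Proof. apply sig_eq, sieve_ext. intros. symmetry. apply pb_pb. Qed.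
Definition Omega : Psh D := MkPsh Omega_map_id Omega_map_cmp.

Hypothesis HJ : is_topology J.

Lemma closed_iff_covers o (S : sieve o) (HS : closed_sieve S) e (k : hom D e o) :
  S e k <-> J (pb_sieve k S).
Proof.
  split; [| apply (proj2 HS)]. intros Hk. apply (J_ext (J_max HJ e)).
  intros e' g. unfold max_sieve, pb_sieve. split; auto. intros _. apply (proj1 HS); auto.
Qed.

Lemma meet_closed o (S T : sieve o) :
  closed_sieve S -> closed_sieve T -> closed_sieve (fun e (h : hom D e o) => S e h /\ T e h).
Proof.
  intros [Ss Sc] [Ts Tc]. split.
  - intros e h e' g [H1 H2]. split; auto.
  - intros e k Hk. split; [apply Sc | apply Tc]; apply (J_up HJ Hk);
      try (apply pb_is_sieve; auto); intros e' g Hg; apply Hg.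
Qed.

Definition Omega_meet (A : Psh D) (c1 c2 : NT A Omega) : NT A Omega.
Proof.
  refine (mkNT (fun o (z : pobj A o) => (exist _ _ (meet_closed
            (proj2_sig (ntc c1 o z)) (proj2_sig (ntc c2 o z))) : pobj Omega o)) _).
  intros a b f x. apply sig_eq, sieve_ext. intros e h. unfold pb_sieve.
  rewrite !naturality. simpl. unfold pb_sieve. tauto.
Defined.

Section Gluing.
Local Unset Implicit Arguments.
Variables (o : ob D) (R : sieve o) (HR : J R)
  (s : forall e (h : hom D e o), R e h -> pobj Omega e).
Hypothesis Hs : forall e (h : hom D e o) (Hh : R e h) e' (g : hom D e' e) (Hg : R e' (cmp h g)),
  s e' (cmp h g) Hg = pmap Omega g (s e h Hh).

Definition local_sieve e (k : hom D e o) : sieve e :=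
  fun e' g => exists H : R e' (cmp k g), proj1_sig (s e' (cmp k g) H) e' (idm e').

Lemma local_sieve_cmp e (k : hom D e o) e0 (k' : hom D e0 e) e' (g : hom D e' e0) :
  local_sieve e0 (cmp k k') e' g <-> local_sieve e k e' (cmp k' g).
Proof. unfold local_sieve. rewrite (cmp_assoc k k' g). tauto. Qed.

Lemma local_sieve_on_R e (h : hom D e o) (Hh : R e h) e' (g : hom D e' e) :
  local_sieve e h e' g <-> proj1_sig (s e h Hh) e' g.
Proof.
  assert (Hmatch : forall Hg : R e' (cmp h g),
    proj1_sig (s e' (cmp h g) Hg) e' (idm e') <-> proj1_sig (s e h Hh) e' g).
  { intros Hg. rewrite (Hs e h Hh e' g Hg). simpl. unfold pb_sieve. rewrite cmp_idr. tauto. }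
  split.
  - intros [Hg H]. apply (Hmatch Hg). exact H.
  - intros H. exists (J_sieve HJ HR g Hh). apply Hmatch. exact H.
Qed.

Lemma local_is_sieve e (k : hom D e o) : is_sieve (local_sieve e k).
Proof.
  intros e1 g e2 g' [H1 H2]. apply local_sieve_cmp, (local_sieve_on_R e1 _ H1).
  apply sieve_idm; [apply (proj2_sig (s e1 (cmp k g) H1)) | exact H2].
Qed.

(** the amalgamation: the arrows k along which the local sieve covers *)
Definition glued_sieve : sieve o := fun e k => J (local_sieve e k).

(** the amalgamation is closed, by local character of J *)
Lemma glued_closed : closed_sieve glued_sieve.
Proof.
  split.
  - intros e k e' g Hk. unfold glued_sieve in *. eapply J_ext; [apply (J_pb HJ g Hk) |].
    intros e'' g'. unfold pb_sieve. symmetry. apply local_sieve_cmp.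
  - intros e k Hk. apply (J_trans HJ Hk (local_is_sieve e k)). intros e' g Hg.
    eapply J_ext; [exact Hg |]. intros. unfold pb_sieve. apply local_sieve_cmp.
Qed.

Definition glued : pobj Omega o := exist _ _ glued_closed.

Lemma glued_restrict e (h : hom D e o) (Hh : R e h) : pmap Omega h glued = s e h Hh.
Proof.
  apply sig_eq, sieve_ext. intros e' k. simpl. unfold pb_sieve, glued_sieve.
  rewrite (closed_iff_covers (proj2_sig (s e h Hh))).
  split; intros H; eapply J_ext; try exact H; intros e'' g;
    rewrite local_sieve_cmp, (local_sieve_on_R e h Hh); unfold pb_sieve; tauto.
Qed.

Lemma glued_unique (y : pobj Omega o) :
  (forall e (h : hom D e o) (Hh : R e h), pmap Omega h y = s e h Hh) -> y = glued.
Proof.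
  intros Hy. destruct (proj2_sig y) as [ys yc].
  assert (Hloc : forall e (k : hom D e o) e' (g : hom D e' e),
    local_sieve e k e' g <-> R e' (cmp k g) /\ proj1_sig y e' (cmp k g)).
  { intros e k e' g. rewrite <- (cmp_idr (cmp k g)) at 2. split.
    - intros [H1 H2]. split; auto. rewrite <- (Hy _ _ H1) in H2. exact H2.
    - intros [H1 H2]. exists H1. rewrite <- (Hy _ _ H1). exact H2. }
  apply sig_eq, sieve_ext. intros e k. simpl. unfold glued_sieve. split.
  - intros Hk. apply (J_up HJ (J_pb HJ k HR) (local_is_sieve e k)).
    intros e' g Hg. apply Hloc. split; auto.
  - intros Hk. apply yc. apply (J_up HJ Hk); [apply pb_is_sieve; auto |].
    intros e' g Hg. apply Hloc in Hg. apply Hg.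
Qed.

End Gluing.

Lemma Omega_sheaf : is_sheaf J Omega.
Proof.
  intros o R HR s Hs. exists (glued o R HR s Hs). split.
  - apply glued_restrict.
  - apply glued_unique.
Qed.

End Omega.

Section Subsheaves.
Variables (D : Cat) (J : coverage D) (A : Psh D) (chi : NT A (Omega J)).

Definition holds o (z : pobj A o) : Prop := proj1_sig (ntc chi o z) o (idm o).

Lemma holds_pmap_iff a b (k : hom D a b) (z : pobj A b) :
  holds (pmap A k z) <-> proj1_sig (ntc chi b z) a k.
Proof. unfold holds. rewrite naturality. simpl. unfold pb_sieve. rewrite cmp_idr. tauto. Qed.

Lemma holds_pmap a b (k : hom D a b) (z : pobj A b) : holds z -> holds (pmap A k z).
Proof.
  intros H. apply holds_pmap_iff, sieve_idm; [apply (proj2_sig (ntc chi b z)) | exact H].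
Qed.

Definition Sub_ob o := {z : pobj A o | holds z}.
Definition Sub_map a b (k : hom D a b) (z : Sub_ob b) : Sub_ob a :=
  exist _ (pmap A k (proj1_sig z)) (holds_pmap k (proj2_sig z)).
Lemma Sub_map_id a (z : Sub_ob a) : Sub_map (idm a) z = z.
Proof. apply sig_eq, pmap_id. Qed.
Lemma Sub_map_cmp a b c (g : hom D b c) (f : hom D a b) (z : Sub_ob c) :
  Sub_map (cmp g f) z = Sub_map f (Sub_map g z).
Proof. apply sig_eq, pmap_cmp. Qed.
Definition Sub : Psh D := MkPsh Sub_map_id Sub_map_cmp.

Definition incl : NT Sub A :=
  mkNT (fun a (z : pobj Sub a) => proj1_sig z) (fun _ _ _ _ => eq_refl).

Lemma incl_mono : is_mono_sh J incl.
Proof. intros H _ u v Heq a x. apply sig_eq. apply Heq. Qed.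

Definition sub_lift (H : Psh D) (t : NT H A) (Ht : forall o x, holds (ntc t o x)) : NT H Sub.
Proof.
  refine (mkNT (fun o x => exist _ (ntc t o x) (Ht o x) : pobj Sub o) _).
  intros. apply sig_eq, naturality.
Defined.

Hypotheses (HJ : is_topology J) (HA : is_sheaf J A).

Lemma Sub_sheaf : is_sheaf J Sub.
Proof.
  intros o R HR s Hs.
  destruct (HA HR (s := fun e h H => proj1_sig (s e h H))) as [x [Hx Hu]].
  { intros. rewrite (Hs e h Hh e' g Hg). reflexivity. }
  (* the amalgamation satisfies χ, since χ(x) is closed and contains R *)
  assert (Hxs : holds x).
  { destruct (proj2_sig (ntc chi o x)) as [Hsv Hcl]. apply Hcl.
    apply (J_up HJ HR); [apply pb_is_sieve; auto |].
    intros e h Hh. unfold pb_sieve. rewrite cmp_idl. apply holds_pmap_iff.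
    rewrite (Hx e h Hh). exact (proj2_sig (s e h Hh)). }
  exists (exist _ x Hxs). split.
  - intros e h Hh. apply sig_eq, Hx.
  - intros y Hy. apply sig_eq, Hu. intros e h Hh. rewrite <- (Hy e h Hh). reflexivity.
Qed.

Definition sub_of_char : SubObj J A := MkSub Sub_sheaf incl_mono.

End Subsheaves.
Arguments sub_lift {D J A chi H} t Ht.

Lemma sheaf_sep (D : Cat) (J : coverage D) (A : Psh D) (HA : is_sheaf J A) o (R : sieve o)
  (x y : pobj A o) : J o R -> (forall e (h : hom D e o), R e h -> pmap A h x = pmap A h y) -> x = y.
Proof.
  intros HR Hxy.
  destruct (HA o R HR (fun e h _ => pmap A h x)) as [z [Hz Hu]].
  { intros. apply pmap_cmp. }
  transitivity z; [apply Hu; auto |]. symmetry. apply Hu. intros. symmetry. auto.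
Qed.

Section Monos.
Variables (D : Cat) (J : coverage D) (G A : Psh D) (m : NT G A).

Definition KP_ob o := {p : pobj G o * pobj G o | ntc m o (fst p) = ntc m o (snd p)}.
Lemma KP_pf a b (k : hom D a b) (p : KP_ob b) :
  ntc m a (pmap G k (fst (proj1_sig p))) = ntc m a (pmap G k (snd (proj1_sig p))).
Proof. rewrite !naturality. f_equal. apply (proj2_sig p). Qed.
Definition KP_map a b (k : hom D a b) (p : KP_ob b) : KP_ob a :=
  exist _ (pmap G k (fst (proj1_sig p)), pmap G k (snd (proj1_sig p))) (KP_pf k p).
Lemma KP_map_id a (p : KP_ob a) : KP_map (idm a) p = p.
Proof. apply sig_eq. simpl. rewrite !pmap_id. destruct (proj1_sig p); reflexivity. Qed.
Lemma KP_map_cmp a b c (g : hom D b c) (f : hom D a b) (p : KP_ob c) :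
  KP_map (cmp g f) p = KP_map f (KP_map g p).
Proof. apply sig_eq. simpl. rewrite !pmap_cmp. reflexivity. Qed.
Definition KP : Psh D := MkPsh KP_map_id KP_map_cmp.
Definition kp1 : NT KP G :=
  mkNT (fun a (p : pobj KP a) => fst (proj1_sig p)) (fun _ _ _ _ => eq_refl).
Definition kp2 : NT KP G :=
  mkNT (fun a (p : pobj KP a) => snd (proj1_sig p)) (fun _ _ _ _ => eq_refl).

Hypotheses (HG : is_sheaf J G) (HA : is_sheaf J A) (Hm : is_mono_sh J m).

(** the kernel pair is a sheaf, so it may be used to test the mono property *)
Lemma KP_sheaf : is_sheaf J KP.
Proof.
  intros o R HR s Hs.
  destruct (HG HR (s := fun e h H => fst (proj1_sig (s e h H)))) as [x1 [Hx1 Hu1]].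
  { intros. rewrite (Hs e h Hh e' g Hg). reflexivity. }
  destruct (HG HR (s := fun e h H => snd (proj1_sig (s e h H)))) as [x2 [Hx2 Hu2]].
  { intros. rewrite (Hs e h Hh e' g Hg). reflexivity. }
  assert (Hx : ntc m o x1 = ntc m o x2).
  { apply (sheaf_sep HA HR). intros e h Hh. rewrite <- !naturality.
    rewrite (Hx1 e h Hh), (Hx2 e h Hh). apply (proj2_sig (s e h Hh)). }
  exists (exist _ (x1, x2) Hx). split.
  - intros e h Hh. apply sig_eq. simpl. rewrite (Hx1 e h Hh), (Hx2 e h Hh).
    destruct (proj1_sig (s e h Hh)); reflexivity.
  - intros [[y1 y2] py] Hy. apply sig_eq. simpl. f_equal.
    + apply Hu1. intros e h Hh. rewrite <- (Hy e h Hh). reflexivity.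
    + apply Hu2. intros e h Hh. rewrite <- (Hy e h Hh). reflexivity.
Qed.

(** m equalizes the two projections of its kernel pair, which are therefore equal *)
Lemma mono_inj o (x y : pobj G o) : ntc m o x = ntc m o y -> x = y.
Proof.
  intros Hxy.
  assert (Hkp : nteq (ntcomp m kp1) (ntcomp m kp2)) by (intros a p; apply (proj2_sig p)).
  exact (Hm KP_sheaf Hkp (exist _ (x, y) Hxy)).
Qed.

Lemma image_glue o (R : sieve o) (z : pobj A o) :
  J R -> (forall e (h : hom D e o), R e h -> exists w, ntc m e w = pmap A h z) ->
  exists w, ntc m o w = z.
Proof.
  intros HR Himg.
  set (s := fun e h H => proj1_sig (constructive_indefinite_description _ (Himg e h H))).
  assert (Hs : forall e h H, ntc m e (s e h H) = pmap A h z).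
  { intros. unfold s. destruct (constructive_indefinite_description _ _); simpl; auto. }
  destruct (HG HR (s := s)) as [w [Hw _]].
  { intros. apply mono_inj. rewrite Hs, naturality, Hs. apply pmap_cmp. }
  exists w. apply (sheaf_sep HA HR). intros e h Hh. rewrite <- naturality, (Hw e h Hh). apply Hs.
Qed.

Definition image_sieve o (z : pobj A o) : sieve o := fun e h => exists w, ntc m e w = pmap A h z.

Lemma image_closed o (z : pobj A o) : closed_sieve J (image_sieve z).
Proof.
  split.
  - intros e h e' g [w Hw]. exists (pmap G g w). rewrite naturality, Hw. symmetry. apply pmap_cmp.
  - intros e k Hk. apply (image_glue Hk). intros e' g [w Hw]. exists w. rewrite Hw. apply pmap_cmp.
Qed.

Definition char_map : NT A (Omega J).
Proof.
  refine (mkNT (fun o (z : pobj A o) => (exist _ _ (image_closed z) : pobj (Omega J) o)) _).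
  intros a b f x. apply sig_eq, sieve_ext. intros e h. simpl. unfold image_sieve, pb_sieve.
  rewrite pmap_cmp. tauto.
Defined.

Lemma holds_char_map o (z : pobj A o) : holds char_map z <-> exists w, ntc m o w = z.
Proof. unfold holds. simpl. unfold image_sieve. rewrite pmap_id. tauto. Qed.

Lemma factor_through_mono (H : Psh D) (t : NT H A) :
  (forall o x, exists w, ntc m o w = ntc t o x) -> exists u : NT H G, nteq (ntcomp m u) t.
Proof.
  intros Hex.
  set (F := fun o x => proj1_sig (constructive_indefinite_description _ (Hex o x))).
  assert (HF : forall o x, ntc m o (F o x) = ntc t o x).
  { intros. unfold F. destruct (constructive_indefinite_description _ _). simpl. auto. }
  assert (NF : forall a b (f : hom D a b) x, F a (pmap H f x) = pmap G f (F b x)).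
  { intros. apply mono_inj. rewrite HF, !naturality, HF. reflexivity. }
  exists (mkNT F NF). intros o x. apply HF.
Qed.

End Monos.

Section Pullbacks.
Variables (D : Cat) (J : coverage D) (HJ : is_topology J)
  (A A' : Psh D) (HA : is_sheaf J A) (HA' : is_sheaf J A') (u : NT A' A).

Lemma pullback_reflects (m : SubObj J A) (m' : SubObj J A') :
  is_pullback_sub u m m' -> forall o (z : pobj A' o),
  (exists w, ntc (so_m m) o w = ntc u o z) -> exists w', ntc (so_m m') o w' = z.
Proof.
  intros [q [_ Hpb]] o z Hz.
  (* the preimage of m along u is the subsheaf of A' cut out by χ_m ∘ u *)
  set (chi := ntcomp (char_map (so_sheaf m) HA (so_mono m)) u).
  destruct (factor_through_mono (so_sheaf m) HA (so_mono m) (t := ntcomp u (incl chi))) as [v Hv].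
  { intros o' y. exact (proj1 (holds_char_map (so_sheaf m) HA (so_mono m) _) (proj2_sig y)). }
  destruct (Hpb (Sub chi) (Sub_sheaf (chi := chi) HJ HA') (incl chi) v) as [w [[Hw _] _]].
  { intros o' y. symmetry. apply Hv. }
  assert (Hzs : holds chi z) by exact (proj2 (holds_char_map (so_sheaf m) HA (so_mono m) _) Hz).
  exists (ntc w o (exist _ z Hzs)). apply Hw.
Qed.

Lemma Sub_pullback (chi : NT A (Omega J)) (chi' : NT A' (Omega J)) :
  nteq chi' (ntcomp chi u) -> is_pullback_sub u (sub_of_char chi HJ HA) (sub_of_char chi' HJ HA').
Proof.
  intros Hchi.
  assert (Hq : forall o (z : pobj (Sub chi') o), holds chi (ntc u o (proj1_sig z))).
  { intros o z. pose proof (proj2_sig z) as Hz. unfold holds in Hz |- *.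
    rewrite (Hchi o) in Hz. exact Hz. }
  exists (sub_lift (ntcomp u (incl chi')) Hq). split; [intros o z; reflexivity |].
  intros H _ u' v Huv.
  assert (Hw : forall o (h : pobj H o), holds chi' (ntc u' o h)).
  { intros o h. unfold holds. rewrite (Hchi o). simpl.
    pose proof (Huv o h) as E. simpl in E. rewrite E. apply (proj2_sig (ntc v o h)). }
  exists (sub_lift u' Hw). split; [split |].
  - intros o h. reflexivity.
  - intros o h. apply sig_eq. apply (Huv o h).
  - intros w' Hw' _ o h. apply sig_eq. apply (Hw' o h).
Qed.

End Pullbacks.

Section Sheafification.
Variables (D : Cat) (J : coverage D) (X A : Psh D) (eta : NT X A)
  (Ha : is_sheafification J eta).

Lemma ext_unique (G : Psh D) (HG : is_sheaf J G) (u1 u2 : NT A G) :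
  nteq (ntcomp u1 eta) (ntcomp u2 eta) -> nteq u1 u2.
Proof.
  intros H. destruct (proj2 Ha G HG (ntcomp u1 eta)) as [u [_ Hu]].
  intros a x. rewrite (Hu u1 (fun _ _ => eq_refl) a x).
  symmetry. apply Hu. intros b y. symmetry. apply H.
Qed.

Hypothesis HJ : is_topology J.

Lemma sub_le_of_eta (m n : SubObj J A) :
  (forall o (x : pobj X o), (exists w, ntc (so_m m) o w = ntc eta o x) ->
                            exists w, ntc (so_m n) o w = ntc eta o x) ->
  so_le m n.
Proof.
  intros Hmn. pose proof (proj1 Ha) as HA.
  set (c1 := char_map (so_sheaf m) HA (so_mono m)).
  set (c2 := char_map (so_sheaf n) HA (so_mono n)).
  (* χ_m = χ_m ∧ χ_n, as both agree along η *)
  assert (E : nteq c1 (Omega_meet HJ c1 c2)).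
  { apply (ext_unique (Omega_sheaf HJ)). intros o x. apply sig_eq, sieve_ext.
    intros e h. simpl. unfold image_sieve. split; [| tauto].
    intros Hm. split; auto. rewrite <- naturality in Hm |- *. apply Hmn, Hm. }
  apply (factor_through_mono (so_sheaf n) HA (so_mono n) (t := so_m m)). intros o w.
  assert (Hw : holds c1 (ntc (so_m m) o w)) by (apply holds_char_map; exists w; reflexivity).
  unfold holds in Hw. rewrite (E o) in Hw. destruct Hw as [_ [w' Hw']].
  exists w'. rewrite Hw'. apply pmap_id.
Qed.

End Sheafification.

(** An isomorphism of doctrines whose inverse also respects reindexing. Unlike
    [doc_iso], this notion can be inverted and composed. *)
Definition doc_equiv (C : Cat) (D E : ob C -> Type)
  (leD : forall c, D c -> D c -> Prop) (leE : forall c, E c -> E c -> Prop)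
  (reD : forall c d, hom C d c -> D c -> D d -> Prop)
  (reE : forall c d, hom C d c -> E c -> E d -> Prop) : Prop :=
  exists (phi : forall c, D c -> E c) (psi : forall c, E c -> D c),
    (forall c (x y : D c), leD c x y <-> leE c (phi c x) (phi c y)) /\
    (forall c (z : E c), leE c (phi c (psi c z)) z /\ leE c z (phi c (psi c z))) /\
    (forall c d (f : hom C d c) (x : D c) (y : D d), reD c d f x y -> reE c d f (phi c x) (phi d y)) /\
    (forall c d (f : hom C d c) (x : E c) (y : E d), reE c d f x y -> reD c d f (psi c x) (psi d y)).

Lemma doc_equiv_iso (C : Cat) (D E : ob C -> Type) leD leE reD reE :
  @doc_equiv C D E leD leE reD reE -> doc_iso leD leE reD reE.
Proof. intros [phi [psi [H1 [H2 [H3 _]]]]]. exists phi, psi. auto. Qed.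

Lemma doc_equiv_sym (C : Cat) (D E : ob C -> Type) leD leE reD reE
  (tD : forall c x y z, leD c x y -> leD c y z -> leD c x z)
  (tE : forall c x y z, leE c x y -> leE c y z -> leE c x z) :
  @doc_equiv C D E leD leE reD reE -> @doc_equiv C E D leE leD reE reD.
Proof.
  intros [phi [psi [H1 [H2 [H3 H4]]]]]. exists psi, phi. split; [|split; [|split]]; auto.
  - intros c x y. rewrite H1. split; intros H.
    + apply (tE _ _ _ _ (proj1 (H2 c x))), (tE _ _ _ _ H), H2.
    + apply (tE _ _ _ _ (proj2 (H2 c x))), (tE _ _ _ _ H), H2.
  - intros c z. rewrite !H1. split; apply H2.
Qed.

Lemma doc_equiv_trans (C : Cat) (D E F : ob C -> Type) leD leE leF reD reE reF
  (tF : forall c x y z, leF c x y -> leF c y z -> leF c x z) :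
  @doc_equiv C D E leD leE reD reE -> @doc_equiv C E F leE leF reE reF ->
  @doc_equiv C D F leD leF reD reF.
Proof.
  intros [phi [psi [H1 [H2 [H3 H4]]]]] [phi' [psi' [H1' [H2' [H3' H4']]]]].
  exists (fun c x => phi' c (phi c x)), (fun c z => psi c (psi' c z)).
  split; [|split; [|split]]; auto.
  - intros c x y. rewrite H1, H1'. tauto.
  - intros c z. split; apply (tF _ _ (phi' c (psi' c z))); try apply H2'; apply H1', H2.
Qed.

Lemma so_le_trans (D : Cat) (J : coverage D) (A : Psh D) (m n p : SubObj J A) :
  so_le m n -> so_le n p -> so_le m p.
Proof.
  intros [u Hu] [v Hv]. exists (ntcomp v u). intros a x. simpl.
  transitivity (ntc (so_m n) a (ntc u a x)); [apply (Hv a) | apply (Hu a)].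
Qed.

Lemma Ile_trans (C : Cat) (P : Doctrine C) (J : coverage (CP P)) c (S T U : Icar J c) :
  Ile S T -> Ile T U -> Ile S U.
Proof. unfold Ile. auto. Qed.

Lemma ideal_local (C : Cat) (P : Doctrine C) (J : coverage (CP P)) (HJ : is_topology J)
  c (S : Icar J c) d (f : hom C d c) (x : dP P d) (R : sieve (D := CP P) (existT _ d x)) :
  J _ R -> (forall e (k : hom (CP P) e (existT _ d x)), R e k ->
              proj1_sig S (projT1 e) (cmp f (proj1_sig k)) (projT2 e)) ->
  proj1_sig S d f x.
Proof.
  intros HR HRS. apply (proj2 (proj2_sig S)).
  set (I := {e : ob (CP P) & {k : hom (CP P) e (existT _ d x) | R e k}}).
  exists I, (fun i : I => projT1 i), (fun i : I => proj1_sig (projT2 i)). split.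
  - apply (J_up HJ HR); [apply gen_is_sieve |]. intros e k Hk.
    exists (existT _ e (exist _ k Hk)), (idm e). symmetry. apply (@cmp_idr (CP P)).
  - intros i. apply HRS, (proj2_sig (projT2 i)).
Qed.

Section ZI.
Variables (C : Cat) (P : Doctrine C) (J : coverage (CP P)) (HJ : is_topology J)
  (a : ob C -> Psh (CP P)) (eta : forall c, NT (homP P c) (a c))
  (Ha : forall c, is_sheafification J (eta c)).

Definition ideal_sieve c (S : Icar J c) (o : ob (CP P)) (f : hom C (projT1 o) c) : sieve o :=
  fun o' k => proj1_sig S (projT1 o') (cmp f (proj1_sig k)) (projT2 o').

(** it is closed: ideals are downward closed and local *)
Lemma ideal_sieve_closed c (S : Icar J c) o (f : hom C (projT1 o) c) :
  closed_sieve J (ideal_sieve S f).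
Proof.
  split.
  - intros o1 k o2 g Hk. unfold ideal_sieve in *. simpl. rewrite cmp_assoc.
    apply (proj1 (proj2_sig S) _ _ _ _ _ _ Hk), (proj2_sig g).
  - intros [d x] k Hk. apply (ideal_local HJ Hk). intros e k' Hk'.
    unfold pb_sieve, ideal_sieve in Hk'. simpl in Hk'. rewrite cmp_assoc in Hk'. exact Hk'.
Qed.

Definition ideal_char c (S : Icar J c) : NT (homP P c) (Omega J).
Proof.
  refine (mkNT (fun o (f : pobj (homP P c) o) =>
     (exist _ _ (ideal_sieve_closed S f) : pobj (Omega J) o)) _).
  intros o1 o2 k f. apply sig_eq, sieve_ext. intros e h.
  simpl. unfold ideal_sieve, pb_sieve. simpl. rewrite cmp_assoc. tauto.
Defined.

Definition ext_char c (S : Icar J c) : NT (a c) (Omega J) :=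
  proj1_sig (constructive_indefinite_description _
    (proj2 (Ha c) (Omega J) (Omega_sheaf HJ) (ideal_char S))).

Lemma ext_char_eta c (S : Icar J c) o f :
  ntc (ext_char S) o (ntc (eta c) o f) = ntc (ideal_char S) o f.
Proof.
  exact (proj1 (proj2_sig (constructive_indefinite_description _
     (proj2 (Ha c) (Omega J) (Omega_sheaf HJ) (ideal_char S)))) o f).
Qed.

Definition sub_of_ideal c (S : Icar J c) : Zcar J a c := sub_of_char (ext_char S) HJ (proj1 (Ha c)).

Definition in_sub c (m : Zcar J a c) (o : ob (CP P)) (f : hom C (projT1 o) c) : Prop :=
  exists w, ntc (so_m m) o w = ntc (eta c) o f.
Arguments in_sub {c} m o f.

Lemma in_sub_existT c (m : Zcar J a c) o f : in_sub m (existT _ (projT1 o) (projT2 o)) f <-> in_sub m o f.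
Proof. destruct o. tauto. Qed.

(** the pairs belonging to a subobject form an ideal; locality is [image_glue] *)
Lemma ideal_of_sub_closed c (m : Zcar J a c) :
  @Iclosed C P J c (fun d f x => in_sub m (existT _ d x) f).
Proof.
  split.
  - intros d f x e g y [w Hw] Hy.
    set (k := (exist _ g Hy : hom (CP P) (existT _ e y) (existT _ d x))).
    exists (pmap (so_dom m) k w). rewrite naturality, Hw, <- naturality. reflexivity.
  - intros d f x [I [e [h [Hc Hi]]]].
    apply (image_glue (so_sheaf m) (proj1 (Ha c)) (so_mono m) Hc).
    intros e' k [i [g ->]]. destruct (proj1 (in_sub_existT (o := e i) m _) (Hi i)) as [w Hw].
    exists (pmap (so_dom m) g w). rewrite naturality, Hw, <- !naturality. simpl. f_equal.
    symmetry. apply cmp_assoc.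
Qed.

Definition ideal_of_sub c (m : Zcar J a c) : Icar J c := exist _ _ (ideal_of_sub_closed m).

Lemma ideal_of_sub_mem c (m : Zcar J a c) o f :
  proj1_sig (ideal_of_sub m) (projT1 o) f (projT2 o) <-> in_sub m o f.
Proof. apply in_sub_existT. Qed.

Lemma ideal_of_sub_of_ideal c (S : Icar J c) d f x :
  proj1_sig (ideal_of_sub (sub_of_ideal S)) d f x <-> proj1_sig S d f x.
Proof.
  simpl. unfold in_sub. simpl.
  assert (E : holds (ext_char S) (ntc (eta c) (existT _ d x) f) <-> proj1_sig S d f x).
  { unfold holds. rewrite ext_char_eta. simpl. unfold ideal_sieve. simpl.
    rewrite cmp_idr. tauto. }
  split.
  - intros [w Hw]. apply E. rewrite <- Hw. exact (proj2_sig w).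
  - intros H. exists (exist _ _ (proj2 E H)). reflexivity.
Qed.

Lemma ideal_of_sub_le c (m n : Zcar J a c) : so_le m n <-> Ile (ideal_of_sub m) (ideal_of_sub n).
Proof.
  split.
  - intros [u Hu] d f x [w Hw]. exists (ntc u _ w). rewrite <- Hw. exact (Hu _ w).
  - intros Hle. apply (sub_le_of_eta (Ha c) HJ). intros o f Hm.
    apply ideal_of_sub_mem, Hle, ideal_of_sub_mem, Hm.
Qed.

Lemma ideal_of_sub_reindex c d (f : hom C d c) (m : Zcar J a c) (m' : Zcar J a d) :
  Zre eta f m m' -> Ire f (ideal_of_sub m) (ideal_of_sub m').
Proof.
  intros [u [Hu Hpb]] e g y. simpl. unfold in_sub.
  assert (Hug : ntc u _ (ntc (eta d) (existT (dP P) e y) g)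
                = ntc (eta c) (existT (dP P) e y) (cmp f g))
    by apply (Hu (existT (dP P) e y) g).
  split.
  - destruct Hpb as [q [Hq _]]. intros [w Hw]. exists (ntc q _ w).
    rewrite <- Hug, <- Hw. apply (Hq _ w).
  - intros Hm. apply (pullback_reflects HJ (proj1 (Ha c)) (proj1 (Ha d)) Hpb).
    rewrite Hug. exact Hm.
Qed.

Lemma sub_of_ideal_reindex c d (f : hom C d c) (S : Icar J c) (T : Icar J d) :
  Ire f S T -> Zre eta f (sub_of_ideal S) (sub_of_ideal T).
Proof.
  intros HST. unfold Ire in HST.
  destruct (proj2 (Ha d) (a c) (proj1 (Ha c)) (ntcomp (eta c) (homPmap P f))) as [u [Hu _]].
  exists u. split; [exact Hu |]. apply Sub_pullback.
  (* χ_T = χ_S ∘ u, as both agree along η_d *)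
  apply (ext_unique (Ha d) (Omega_sheaf HJ)). intros o g. simpl.
  rewrite ext_char_eta. pose proof (Hu o g) as E. simpl in E. rewrite E, ext_char_eta.
  apply sig_eq, sieve_ext. intros o' k. simpl. unfold ideal_sieve.
  rewrite HST, cmp_assoc. tauto.
Qed.

Theorem Z_equiv_I : doc_equiv (@Zle C P J a) (@Ile C P J) (@Zre C P J a eta) (@Ire C P J).
Proof.
  exists (fun c m => ideal_of_sub m), (fun c S => sub_of_ideal S).
  split; [|split; [|split]].
  - intros c m n. apply ideal_of_sub_le.
  - intros c S. split; intros d f x; apply ideal_of_sub_of_ideal.
  - intros c d f m m'. apply ideal_of_sub_reindex.
  - intros c d f S T. apply sub_of_ideal_reindex.
Qed.

End ZI.

Section TopCompletion.
Variables (C : Cat) (P : Doctrine C) (J : coverage (CP P)) (HJ : is_topology J).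

Lemma lift_hom_cmp (a b c : ob (CP P)) (h : hom (CP P) b c) (k : hom (CP P) a b) :
  lift_hom (cmp h k) = cmp (lift_hom h) (lift_hom k).
Proof. apply sig_eq. reflexivity. Qed.

Lemma restrict_is_sieve c x (S : sieve (D := CP (Ptop P)) (existT _ c (Some x))) :
  is_sieve S -> is_sieve (restrict_sieve S).
Proof. intros HS e h e' g H. unfold restrict_sieve in *. rewrite lift_hom_cmp. apply HS, H. Qed.

Lemma Jtop_max o : Jtop J (max_sieve (o := o)).
Proof.
  destruct o as [c [x|]]; simpl; (split; [intros ? ? ? ? ?; exact I |]).
  - eapply J_ext; [apply (J_max HJ) |]. intros. unfold max_sieve, restrict_sieve. tauto.
  - intros d y f. eapply J_ext; [apply (J_max HJ) |].
    intros. unfold max_sieve, restrict_sieve, pb_sieve. tauto.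
Qed.

Lemma Jtop_pb o (S : sieve o) b (f : hom (CP (Ptop P)) b o) :
  Jtop J S -> Jtop J (pb_sieve f S).
Proof.
  destruct o as [c [x|]], b as [d [y|]]; simpl; intros [Ss HS];
    (split; [apply pb_is_sieve; auto |]).
  - set (f' := (exist _ (proj1_sig f) (proj2_sig f) : hom (CP P) (existT _ d y) (existT _ c x))).
    eapply J_ext; [apply (J_pb HJ f' HS) |]. intros e h. unfold pb_sieve, restrict_sieve.
    assert (E : lift_hom (cmp f' h) = cmp f (lift_hom h)) by (apply sig_eq; reflexivity).
    rewrite E. tauto.
  - (* there is no arrow from (d,⊤) to (c,x) *)
    destruct f as [g pf]. contradiction.
  - apply HS.
  - intros d' y' f'. eapply J_ext; [apply (HS _ _ (cmp f f')) |].
    intros e h. unfold restrict_sieve. symmetry. apply pb_pb.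
Qed.

Lemma Jtop_trans o (S R : sieve o) :
  Jtop J S -> is_sieve R ->
  (forall e (h : hom (CP (Ptop P)) e o), S e h -> Jtop J (pb_sieve h R)) -> Jtop J R.
Proof.
  destruct o as [c [x|]]; simpl; intros [Ss HS] HR Hh; split; auto.
  - apply (J_trans HJ HS); [apply restrict_is_sieve; auto |].
    intros [e y] h Hs. destruct (Hh _ _ Hs) as [_ H2]. simpl in H2.
    eapply J_ext; [exact H2 |]. intros e0 k. unfold restrict_sieve, pb_sieve.
    rewrite lift_hom_cmp. tauto.
  - intros d y f. apply (J_trans HJ (HS d y f)).
    { apply restrict_is_sieve, pb_is_sieve; auto. }
    intros [e z] h Hs. unfold restrict_sieve, pb_sieve in Hs.
    destruct (Hh _ _ Hs) as [_ H2]. simpl in H2.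
    eapply J_ext; [exact H2 |]. intros e0 k. unfold restrict_sieve, pb_sieve.
    rewrite lift_hom_cmp, cmp_assoc. tauto.
Qed.

Lemma Jtop_topology : is_topology (Jtop J).
Proof.
  split; [|split; [|split]].
  - intros [c [x|]] S; simpl; tauto.
  - apply Jtop_max.
  - intros o S b f. apply Jtop_pb.
  - intros o S R. apply Jtop_trans.
Qed.

Lemma restrict_ideal_closed c (S : Icar (Jtop J) c) :
  @Iclosed C P J c (fun d f x => proj1_sig S d f (Some x)).
Proof.
  destruct (proj2_sig S) as [Sdown Scov]. split.
  - intros d f x e g y H Hy. apply (Sdown d f (Some x) e g (Some y) H), Hy.
  - intros d f x [I [e [h [Hc Hi]]]]. apply (Scov d f (Some x)).
    exists I, (fun i => existT (fun c => dP (Ptop P) c) (projT1 (e i)) (Some (projT2 (e i)))),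
      (fun i => lift_hom (h i)).
    split; [| intros i; apply Hi].
    simpl. split; [apply gen_is_sieve |].
    eapply J_ext; [exact Hc |]. intros e0 k. unfold restrict_sieve. split.
    + intros [i [g ->]]. exists i, (lift_hom g). apply sig_eq; reflexivity.
    + intros [i [g Hg]]. exists i, (exist _ (proj1_sig g) (proj2_sig g) : hom (CP P) e0 (e i)).
      apply sig_eq. exact (f_equal (@proj1_sig _ _) Hg).
Qed.

Definition extend_pred c (T : Icar J c) : Ipred (Ptop P) c :=
  fun d f ox => match ox with
                | Some x => proj1_sig T d f x
                | None => forall e (g : hom C e d) y, proj1_sig T e (cmp f g) y
                end.

Lemma extend_pred_below c (T : Icar J c) (o : ob (CP (Ptop P))) (f : hom C (projT1 o) c) :
  extend_pred T f (projT2 o) ->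
  forall e y (g : hom (CP (Ptop P)) (existT _ e (Some y)) o), proj1_sig T e (cmp f (proj1_sig g)) y.
Proof.
  destruct o as [d [x|]]; simpl; intros H e y g.
  - apply (proj1 (proj2_sig T) _ _ _ _ _ _ H), (proj2_sig g).
  - apply H.
Qed.

Lemma extend_pred_gen c (T : Icar J c) d (f : hom C d c) ox (I : Type)
  (e : I -> ob (CP (Ptop P))) (h : forall i, hom (CP (Ptop P)) (e i) (existT _ d ox))
  (Hi : forall i, extend_pred T (cmp f (proj1_sig (h i))) (projT2 (e i)))
  e0 y (k : hom (CP (Ptop P)) (existT _ e0 (Some y)) (existT _ d ox)) :
  gen_sieve h k -> proj1_sig T e0 (cmp f (proj1_sig k)) y.
Proof.
  intros [i [g ->]]. simpl. rewrite cmp_assoc. exact (extend_pred_below (Hi i) g).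
Qed.

(** the extension of an ideal is an ideal: locality at (d,⊤) is checked at
    every (e,y) → (d,⊤), where it is the locality of T *)
Lemma extend_ideal_closed c (T : Icar J c) : @Iclosed C (Ptop P) (Jtop J) c (extend_pred T).
Proof.
  destruct (proj2_sig T) as [Tdown _]. split.
  - intros d f [x|] e g [y|] H Hy; simpl in *.
    + eapply Tdown; eauto.
    + contradiction.
    + apply H.
    + intros e' g' y'. rewrite <- cmp_assoc. apply H.
  - intros d f [x|] [I [e [h [[_ Hc] Hi]]]]; simpl in *.
    + apply (ideal_local HJ (S := T) Hc). intros e0 k Hk.
      exact (extend_pred_gen (h := h) Hi (k := lift_hom k) Hk).
    + intros e0 g y.
      set (g' := (exist _ g Logic.I : hom (CP (Ptop P)) (existT _ e0 (Some y)) (existT _ d None))).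
      apply (ideal_local HJ (S := T) (f := cmp f g) (Hc e0 y g')). intros e1 k Hk.
      rewrite <- cmp_assoc. exact (extend_pred_gen (h := h) Hi (k := cmp g' (lift_hom k)) Hk).
Qed.

Lemma ideal_top_iff c (S : Icar (Jtop J) c) d (f : hom C d c) :
  proj1_sig S d f None <-> forall e (g : hom C e d) y, proj1_sig S e (cmp f g) (Some y).
Proof.
  destruct (proj2_sig S) as [Sdown Scov]. split.
  - intros H e g y. apply (Sdown d f None e g (Some y) H). exact I.
  - intros H. apply (Scov d f None).
    (* the family of all arrows (e,y) → (d,⊤) with y ∈ P(e) covers *)
    set (Ix := {e : ob C & {y : dP P e & hom C e d}}).
    exists Ix, (fun i : Ix => existT (fun c => dP (Ptop P) c) (projT1 i) (Some (projT1 (projT2 i)))),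
      (fun i : Ix => (exist _ (projT2 (projT2 i)) I : hom (CP (Ptop P))
          (existT (fun c => dP (Ptop P) c) (projT1 i) (Some (projT1 (projT2 i))))
          (existT (fun c => dP (Ptop P) c) d None))).
    split; [| intros i; apply H].
    simpl. split; [apply gen_is_sieve |]. intros d' x' f'.
    eapply J_ext; [apply (J_max HJ) |]. intros e0 k.
    unfold max_sieve, restrict_sieve, pb_sieve. split; auto. intros _.
    exists (existT _ (projT1 e0) (existT _ (projT2 e0) (cmp (proj1_sig f') (proj1_sig k)))).
    exists (idm _). apply sig_eq. simpl. symmetry. apply cmp_idr.
Qed.

Theorem Itop_equiv_I :
  doc_equiv (@Ile C (Ptop P) (Jtop J)) (@Ile C P J) (@Ire C (Ptop P) (Jtop J)) (@Ire C P J).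
Proof.
  exists (fun c S => exist _ _ (restrict_ideal_closed S)),
    (fun c T => exist _ _ (extend_ideal_closed T)).
  split; [|split; [|split]].
  - intros c S T. split.
    + intros H d f x. apply H.
    + intros H d f [x|] Hs; [apply H, Hs |].
      apply ideal_top_iff. intros e g y. apply H, (proj1 (ideal_top_iff S f) Hs).
  - intros c T. split; intros d f x H; exact H.
  - intros c d f S T H e g y. apply H.
  - intros c d f S T H e g [y|]; simpl; [apply H |].
    split; intros H1 e' g' y'.
    + rewrite <- cmp_assoc. apply H, H1.
    + apply H. rewrite cmp_assoc. apply H1.
Qed.

End TopCompletion.

Theorem proposition4p7
  (C : Cat) (P : Doctrine C) (J : coverage (CP P)) (HJ : is_topology J)
  (aP : ob C -> Psh (CP P)) (eP : forall c, NT (homP P c) (aP c))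
  (HaP : forall c, is_sheafification J (eP c))
  (aT : ob C -> Psh (CP (Ptop P))) (eT : forall c, NT (homP (Ptop P) c) (aT c))
  (HaT : forall c, is_sheafification (@Jtop C P J) (eT c)) :
  doc_iso (@Zle C P J aP) (@Zle C (Ptop P) (@Jtop C P J) aT)
          (@Zre C P J aP eP) (@Zre C (Ptop P) (@Jtop C P J) aT eT) /\
  doc_iso (@Zle C (Ptop P) (@Jtop C P J) aT) (@Ile C (Ptop P) (@Jtop C P J))
          (@Zre C (Ptop P) (@Jtop C P J) aT eT) (@Ire C (Ptop P) (@Jtop C P J)) /\
  doc_iso (@Ile C (Ptop P) (@Jtop C P J)) (@Ile C P J)
          (@Ire C (Ptop P) (@Jtop C P J)) (@Ire C P J) /\
  doc_iso (@Zle C P J aP) (@Ile C P J) (@Zre C P J aP eP) (@Ire C P J).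
Proof.
  pose proof (Z_equiv_I HJ HaP) as ZI.
  pose proof (Z_equiv_I (Jtop_topology HJ) HaT) as ZIT.
  pose proof (Itop_equiv_I HJ) as ITI.
  pose proof (fun c => @Ile_trans C P J c) as transI.
  pose proof (fun c => @Ile_trans C (Ptop P) (Jtop J) c) as transIT.
  pose proof (fun c => @so_le_trans _ (Jtop J) (aT c)) as transZT.
  (* Z(P,J) ≅ I(P,J) ≅ I(P^⊤,J^⊤) ≅ Z(P^⊤,J^⊤) *)
  pose proof (doc_equiv_trans transZT ZI (doc_equiv_trans transZT
    (doc_equiv_sym transIT transI ITI) (doc_equiv_sym transZT transIT ZIT))) as ZZT.
  split; [|split; [|split]]; apply doc_equiv_iso; assumption.
Qed.
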